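(* Let $n\geq 1$ and $s\geq 1$ be integers. Let $G$ be a connected graph on $n+s$ vertices and let $S\subseteq V(G)$ with $|S|=s$. Suppose that every non-terminal level with respect to $S$ contains at least $2$ vertices, and that the second level, if it is non-terminal, contains at least $3$ vertices. Then \[ \sigma(S)\leq \begin{cases} \frac{1}{4}(n^2+8), & \text{if } 2\mid n,\\[2pt] \frac{1}{4}(n^2+7), & \text{if } 2\nmid n. \end{cases} \]
   Context: For a connected graph $G$ and $\emptyset\neq S\subseteq V(G)$, $d_G(S,u)=\min\{d_G(u,v): v\in S\}$, and the status of $S$ is $\sigma(S)=\sigma_G(S)=\sum_{u\in V(G)} d_G(S,u)$. For $i\geq 1$, the $i$-th level with respect to $S$ is the set of vertices $u$ with $d_G(S,u)=i$. The terminal level is the nonempty level with the largest index $i$; the non-terminal levels are all levels $1,\dots,r$ preceding the terminal level $r+1$ (all of which are nonempty by connectivity). *)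

From mathcomp Require Import all_boot.
Set Implicit Arguments. Unset Strict Implicit. Unset Printing Implicit Defensive.

Definition walk_of_len (T : finType) (e : rel T) (v u : T) (k : nat) : bool :=
  [exists p : k.-tuple T, path e v p && (last v p == u)].

(* d_G(v,u): the length of a shortest walk (= shortest path) from v to u;
   distances in a graph on #|T| vertices are < #|T|, so searching k in
   0..#|T|-1 suffices for connected graphs. *)
Definition gdist (T : finType) (e : rel T) (v u : T) : nat :=
  find (fun k => walk_of_len e v u k) (iota 0 #|T|).

Definition setdist (T : finType) (e : rel T) (S : {set T}) (u : T) : nat :=
  \big[minn/#|T|]_(v in S) gdist e v u.

Definition status (T : finType) (e : rel T) (S : {set T}) : nat :=
  \sum_(u : T) setdist e S u.

Definition level (T : finType) (e : rel T) (S : {set T}) (i : nat) : {set T} :=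
  [set u | setdist e S u == i].

Definition terminal_index (T : finType) (e : rel T) (S : {set T}) : nat :=
  \max_(u : T) setdist e S u.

(* Write [t] for the terminal index, [L_i] for the i-th level and [n] for the
   number of vertices outside [S].  A vertex at distance [d] from [S] also
   contributes its deficit [t - d] when [1 <= d < t], so
   [sigma(S) + sum_(1 <= i < t) (t - i) |L_i| <= t n].  The lower bounds on the
   level sizes give [sum_(1 <= i < t) (t - i) |L_i| >= t^2 - 2], hence
   [sigma(S) <= t n - t^2 + 2], and [4 (t n - t^2) <= n^2 - odd n] because
   [(n - 2t)^2] is a square, and is odd when [n] is. *)

From HB Require Import structures.
From mathcomp Require Import all_boot.
From mathcomp Require Import zify.

Lemma four_mul_add_odd_le (t n : nat) : 4 * (t * n) + odd n <= n ^ 2 + 4 * (t * t).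
Proof.
rewrite -(odd_double_half n); move: (odd n) (n./2) => b k; rewrite -mul2n.
by case: b; have [t_le_k | k_lt_t] := leqP t k; nia.
Qed.

Lemma double_sum_subn (t : nat) : 2 * \sum_(1 <= i < t) (t - i) = t * t.-1.
Proof.
have sum_id : \sum_(1 <= i < t) (t - i) = \sum_(0 <= i < t) i.
  case: t => [|t]; first by rewrite !big_geq.
  rewrite big_nat_rev [in RHS]big_ltn //= add0n.
  by apply: eq_big_nat => i /andP[i_gt0 i_le_t]; lia.
by rewrite sum_id bin2_sum -mul_bin_diag bin1.
Qed.

Lemma sum_weighted_sizes_lb (t : nat) (c : nat -> nat) :
  (forall i, 1 <= i < t -> 2 <= c i) -> (2 < t -> 3 <= c 2) ->
  t * t <= \sum_(1 <= i < t) (t - i) * c i + 2.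
Proof.
move=> c_ge2 c2_ge3.
have c_lb : \sum_(1 <= i < t) (t - i) * (2 + (i == 2))
            <= \sum_(1 <= i < t) (t - i) * c i.
  rewrite big_nat_cond [leqRHS]big_nat_cond.
  apply: leq_sum => i /andP[/andP[i_gt0 i_lt_t] _]; rewrite leq_mul2l; apply/orP; right.
  case: eqP => [i2 | _]; last by rewrite addn0 c_ge2 ?i_gt0.
  by rewrite i2 c2_ge3 // -i2.
have split_lb : \sum_(1 <= i < t) (t - i) * (2 + (i == 2))
                = t * t.-1 + (if 2 < t then t - 2 else 0).
  rewrite (eq_bigr (fun i => (t - i) * 2 + (t - i) * (i == 2))); last first.
    by move=> i _; rewrite mulnDr.
  rewrite big_split /= -big_distrl /= [_ * 2]mulnC double_sum_subn.
  congr (_ + _); rewrite -(big_nat1_eq addn (fun i => t - i) 2 1 t) [RHS]big_mkcond /=.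
  by apply: eq_bigr => i _; case: eqP => _; rewrite ?muln1 ?muln0.
move: c_lb; rewrite split_lb.
by case: ifP => t_gt2; nia.
Qed.

Lemma add_sum_eq_weight_le (d t : nat) : d <= t ->
  d + \sum_(1 <= i < t) (d == i) * (t - i) <= t.
Proof.
move=> d_le_t.
have -> : \sum_(1 <= i < t) (d == i) * (t - i) = \sum_(1 <= i < t | i == d) (t - i).
  rewrite [RHS]big_mkcond; apply: eq_bigr => i _.
  by rewrite eq_sym; case: eqP; rewrite ?mul1n ?mul0n.
by rewrite big_nat1_eq; case: ifP; lia.
Qed.

(* Lets [bigD1] split the [minn]-iteration defining [setdist]. *)
HB.instance Definition _ := SemiGroup.isComLaw.Build nat minn minnA minnC.

Section StatusOfASet.

Variables (T : finType) (e : rel T) (S : {set T}).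

Local Notation t := (terminal_index e S).

Lemma gdist_refl (u : T) : gdist e u u = 0.
Proof.
have : 0 < #|T| by apply/card_gt0P; exists u.
rewrite /gdist; case: #|T| => //= m _.
have walk0 : walk_of_len e u u 0 by apply/existsP; exists [tuple]; rewrite /= eqxx.
by rewrite walk0.
Qed.

Lemma setdist_in_set (u : T) : u \in S -> setdist e S u = 0.
Proof. by move=> uS; rewrite /setdist (bigD1 u) //= gdist_refl min0n. Qed.

Lemma setdist_le_terminal (u : T) : setdist e S u <= t.
Proof. exact: (leq_bigmax u). Qed.

Lemma status_add_level_weights_le :
  status e S + \sum_(1 <= i < t) (t - i) * #|level e S i| <= t * #|~: S|.
Proof.
have -> : \sum_(1 <= i < t) (t - i) * #|level e S i|
          = \sum_u \sum_(1 <= i < t) (setdist e S u == i) * (t - i).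
  rewrite exchange_big; apply: eq_bigr => i _.
  rewrite -big_distrl /= mulnC -sum1_card big_mkcond /=; congr (_ * _).
  by apply: eq_bigr => u _; rewrite inE; case: eqP.
have -> : t * #|~: S| = \sum_u (u \notin S) * t.
  rewrite -big_distrl /= mulnC -sum1_card big_mkcond /=; congr (_ * _).
  by apply: eq_bigr => u _; rewrite inE.
rewrite /status -big_split /=; apply: leq_sum => u _.
have [uS | uNS] := boolP (u \in S); last first.
  by rewrite mul1n add_sum_eq_weight_le ?setdist_le_terminal.
rewrite setdist_in_set // add0n big1_seq // => i; rewrite mem_index_iota.
by case: i.
Qed.

End StatusOfASet.

Theorem lemma7 (T : finType) (e : rel T) (n s : nat) (S : {set T}) :
  symmetric e -> irreflexive e ->
  (forall u v : T, connect e u v) ->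
  1 <= n -> 1 <= s ->
  #|T| = n + s -> #|S| = s ->
  (forall i, 1 <= i < terminal_index e S -> 2 <= #|level e S i|) ->
  (2 < terminal_index e S -> 3 <= #|level e S 2|) ->
  4 * status e S <= n ^ 2 + (if odd n then 7 else 8).
Proof.
move=> _ _ _ _ _ card_T card_S level_ge2 level2_ge3.
have card_compl : #|~: S| = n by have := cardsC S; lia.
have := @status_add_level_weights_le T e S; rewrite card_compl.
have := @sum_weighted_sizes_lb _ (fun i => #|level e S i|) level_ge2 level2_ge3.
have := four_mul_add_odd_le (terminal_index e S) n.
case: (odd n); lia.
Qed.
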